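(* The $(2+1)$ elitist black-box complexity of $\textsc{OneMax}$, both in the Las Vegas and in the Monte Carlo sense, is at most $n+1$.
   Context: For $z\in\{0,1\}^n$, $\textsc{Om}_z:\{0,1\}^n\to\mathbb{R}$, $\textsc{Om}_z(x)=n-\sum_{i=1}^n (x_i\oplus z_i)$ (number of positions where $x$ and $z$ agree); $\textsc{OneMax}=\{\textsc{Om}_z : z\in\{0,1\}^n\}$. A $(\mu+\lambda)$ elitist black-box algorithm (here $\mu=2,\lambda=1$) maintains a multiset $X$ of $\mu$ search points, initially sampled one by one with each distribution depending only on previous points and the ranking of their fitness values; in each generation it samples $\lambda$ offspring from a distribution depending only on $X$ and the ranking (weak ordering) of the fitness values of $X$ (not the values themselves), learns the ranking of all $\mu+\lambda$ points, and must keep $\mu$ points of highest fitness (ties broken arbitrarily). Runtime: number of sampled search points until an optimum is sampled for the first time. Las Vegas complexity: min over algorithms of max over functions in the class of expected runtime; $p$-Monte Carlo complexity: min over algorithms of the smallest $T$ such that on every function of the class the optimum is sampled within $T$ evaluations with probability at least $1-p$ (unspecified $p$: every constant $p\in(0,1)$). *)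

From HB Require Import structures.
From mathcomp Require Import all_boot all_order all_algebra.
From mathcomp Require Import boolp classical_sets reals ereal sequences.
Set Implicit Arguments. Unset Strict Implicit. Unset Printing Implicit Defensive.
Import Order.TTheory GRing.Theory Num.Theory.
Local Open Scope ring_scope.

Definition bs (n : nat) := {ffun 'I_n -> bool}.

Definition Om (n : nat) (z x : bs n) : nat := (n - \sum_(i < n) (x i (+) z i))%N.

Definition is_opt (n : nat) (f : bs n -> nat) (x : bs n) : bool :=
  [forall y, f y <= f x]%N.

(* Ranking (weak ordering) of the fitness values of k points:
   entry (i,j) tells whether f(x_i) <= f(x_j). *)
Definition rank (k : nat) := {ffun 'I_k * 'I_k -> bool}.
Definition ranking (n k : nat) (f : bs n -> nat) (xs : 'I_k -> bs n) : rank k :=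
  [ffun p : 'I_k * 'I_k => (f (xs p.1) <= f (xs p.2))%N].

Definition pop2 (n : nat) (x1 x2 : bs n) : 'I_2 -> bs n := tnth [tuple x1; x2].
Definition pop3 (n : nat) (x1 x2 y : bs n) : 'I_3 -> bs n := tnth [tuple x1; x2; y].

Definition sw2 (i : 'I_2) : 'I_2 := if val i == 0%N then inord 1 else inord 0.
Definition sw3 (i : 'I_3) : 'I_3 :=
  match val i with 0 => inord 1 | 1 => inord 0 | _ => i end.
Definition rswap2 (r : rank 2) : rank 2 := [ffun p => r (sw2 p.1, sw2 p.2)].
Definition rswap3 (r : rank 3) : rank 3 := [ffun p => r (sw3 p.1, sw3 p.2)].

Definition is_distr (R : realType) (T : finType) (d : T -> R) : Prop :=
  (forall x, 0 <= d x) /\ \sum_x d x = 1.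

(* A (2+1) black-box algorithm, given by its sampling/selection kernels.
   - init1 : distribution of the first search point;
   - init2 x1 : distribution of the second point given the first one;
   - off x1 x2 r : offspring distribution, given the population {x1,x2}
     and the ranking r of their fitness values;
   - sel x1 x2 y r i : probability of discarding point i of (x1,x2,y),
     given the ranking r of all three fitness values. *)
Record alg21 (R : realType) (n : nat) := Alg21 {
  a_init1 : bs n -> R;
  a_init2 : bs n -> bs n -> R;
  a_off : bs n -> bs n -> rank 2 -> bs n -> R;
  a_sel : bs n -> bs n -> bs n -> rank 3 -> 'I_3 -> R
}.

(* Validity as a (2+1) elitist black-box algorithm: the kernels are
   probability distributions, they depend on the population only as a
   multiset (symmetry under swapping the two parents, with the ranking
   permuted accordingly), and selection only discards a point of lowest
   fitness. *)
Definition elitist21 (R : realType) (n : nat) (A : alg21 R n) : Prop :=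
  [/\ is_distr (a_init1 A),
      (forall x1, is_distr (a_init2 A x1)),
      (forall x1 x2 r, is_distr (a_off A x1 x2 r)) &
      (forall x1 x2 y r, is_distr (a_sel A x1 x2 y r))] /\
  (forall x1 x2 r y, a_off A x1 x2 r y = a_off A x2 x1 (rswap2 r) y) /\
  (forall x1 x2 y r i, a_sel A x1 x2 y r i = a_sel A x2 x1 y (rswap3 r) (sw3 i)) /\
  (forall (f : bs n -> nat) x1 x2 y i,
        0 < a_sel A x1 x2 y (ranking f (pop3 x1 x2 y)) i ->
        forall j, (f (pop3 x1 x2 y i) <= f (pop3 x1 x2 y j))%N).

Definition keep (n : nat) (x1 x2 y : bs n) (i : 'I_3) : bs n * bs n :=
  match val i with 0 => (x2, y) | 1 => (x1, y) | _ => (x1, x2) end.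

(* surv A f t x1 x2 = probability that after the initialization and t
   generations no optimum has been sampled and the population is (x1,x2). *)
Fixpoint surv (R : realType) (n : nat) (A : alg21 R n) (f : bs n -> nat)
  (t : nat) (x1' x2' : bs n) : R :=
  match t with
  | 0 => a_init1 A x1' * a_init2 A x1' x2' * (~~ is_opt f x1' && ~~ is_opt f x2')%:R
  | t.+1 => \sum_(x1 : bs n) \sum_(x2 : bs n) \sum_(y : bs n) \sum_(i < 3)
      surv A f t x1 x2 * a_off A x1 x2 (ranking f (pop2 x1 x2)) y
      * (~~ is_opt f y)%:R * a_sel A x1 x2 y (ranking f (pop3 x1 x2 y)) i
      * (keep x1 x2 y i == (x1', x2'))%:R
  end.

(* tailP A f k = P(T > k), where T is the runtime (index of the first
   sampled optimum; evaluations 1,2 are the initial points, evaluation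
   t+2 is the offspring of generation t). *)
Definition tailP (R : realType) (n : nat) (A : alg21 R n) (f : bs n -> nat) (k : nat) : R :=
  match k with
  | 0 => 1
  | 1 => \sum_(x : bs n) a_init1 A x * (~~ is_opt f x)%:R
  | t.+2 => \sum_(x1 : bs n) \sum_(x2 : bs n) surv A f t x1 x2
  end.

(* E[T] = sum_{k >= 0} P(T > k)  (in the extended reals). *)
Definition expected_runtime (R : realType) (n : nat) (A : alg21 R n) (f : bs n -> nat) : \bar R :=
  (\sum_(0 <= k <oo) (tailP A f k)%:E)%E.

From HB Require Import structures.
From mathcomp Require Import all_boot all_order all_algebra.
From mathcomp Require Import boolp classical_sets reals ereal sequences.
From mathcomp Require Import zify lra.
Import Order.TTheory GRing.Theory Num.Theory.
Set Implicit Arguments. Unset Strict Implicit. Unset Printing Implicit Defensive.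
Local Open Scope ring_scope.

(* The algorithm fixes the bits of the optimum [z] one position at a time.
   After [t] generations its population is [p_t] together with [p_t] flipped
   at position [t], where [p_t] agrees with [z] below [t] and is zero above.
   The two points differ only at position [t], so the population itself tells
   the algorithm which bit to work on next, and the one that agrees with [z]
   at [t] is strictly fitter.  The offspring flips position [t+1] of the
   fitter point; it is at least as fit as the other parent, which elitist
   selection can therefore discard.  The run is deterministic and [z] is in
   the population after [n-1] generations, i.e. within [n+1] evaluations, so
   [P(T > n+1) = 0] and [E[T] <= n+1]. *)

Section Survival.
Variables (R : realType) (n : nat) (A : alg21 R n) (f : bs n -> nat).

Lemma surv_opt t x1 x2 : is_opt f x1 || is_opt f x2 -> surv A f t x1 x2 = 0.
Proof.
elim: t x1 x2 => [|t IH] x1' x2' opt12 /=.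
  by case/orP: opt12 => ->; rewrite ?andbF mulr0.
apply: big1 => x1 _; apply: big1 => x2 _; apply: big1 => y _; apply: big1 => i _.
have [/eqP kept|] := boolP (keep x1 x2 y i == (x1', x2')); last by rewrite mulr0.
have [opty|nopty] := boolP (is_opt f y); first by rewrite /= mulr0 !mul0r.
rewrite IH ?mul0r //; move: opt12.
by case: i kept => [[|[|[|]]] ?] //= [<- <-];
  rewrite ?(negbTE nopty) ?orbF // => ->; rewrite ?orbT.
Qed.

Lemma surv_eq0_ge t t' : (t <= t')%N -> (forall x1 x2, surv A f t x1 x2 = 0) ->
  forall x1 x2, surv A f t' x1 x2 = 0.
Proof.
move=> + surv0; elim: t' => [|t' IH]; first by rewrite leqn0 => /eqP <-.
rewrite leq_eqVlt ltnS => /predU1P[<- //|/IH {}IH] x1' x2'.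
rewrite /=; do 4 (apply: big1 => ? _); by rewrite IH !mul0r.
Qed.

End Survival.

Section WorstParentSelection.
Variables (R : realType) (k : nat).

Definition worst_parent (r : rank k.+1) : pred 'I_k.+1 :=
  [pred i | (i != ord_max) && [forall j, r (i, j)]].

(* The last index is the offspring.
   Preferring parents matters: on the runs below the offspring often ties
   with the worse parent. *)
Definition sel_worst (r : rank k.+1) (i : 'I_k.+1) : R :=
  if #|worst_parent r| == 0%N then (i == ord_max)%:R
  else (worst_parent r i)%:R / #|worst_parent r|%:R.

Lemma sum_indicator (T : finType) (a : T) : \sum_x (x == a)%:R = 1 :> R.
Proof. by rewrite (big_only1 a) ?eqxx // => x /negbTE ->. Qed.

Lemma sum_natr_pred (T : finType) (P : pred T) : \sum_x (P x)%:R = #|P|%:R :> R.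
Proof.
rewrite -sumr_const [RHS]big_mkcond.
by apply: eq_bigr => x _; rewrite unfold_in; case: (P x).
Qed.

Lemma sel_worst_distr r : is_distr (sel_worst r).
Proof.
rewrite /sel_worst; case: eqP => [_|/eqP card0].
  by split=> [i|]; rewrite ?sum_indicator.
split=> [i|]; first by rewrite divr_ge0.
by rewrite -mulr_suml sum_natr_pred divff // pnatr_eq0.
Qed.

Lemma worst_parent_ranking n (f : bs n -> nat) (p : 'I_k.+1 -> bs n) i :
  worst_parent (ranking f p) i = (i != ord_max) && [forall j, f (p i) <= f (p j)]%N.
Proof. by congr (_ && _); apply: eq_forallb => j; rewrite ffunE. Qed.

Lemma sel_worst_elitist n (f : bs n -> nat) (p : 'I_k.+1 -> bs n) i :
  0 < sel_worst (ranking f p) i -> forall j, (f (p i) <= f (p j))%N.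
Proof.
have [m _ m_min] := arg_minnP (fun j => f (p j)) (isT : predT ord0).
rewrite /sel_worst; case: eqP => [/eqP/pred0P wp0|_].
  rewrite ltr0n lt0b => /eqP ->.
  have [<- j|m_ne] := eqVneq m ord_max; first exact: m_min.
  by have := wp0 m; rewrite worst_parent_ranking m_ne => /forallP[] j; apply: m_min.
case wpi: (worst_parent _ i); last by rewrite mul0r ltxx.
by move: wpi; rewrite worst_parent_ranking => /andP[_ /forallP].
Qed.

Lemma sel_worst_pred1 r m i :
  worst_parent r =1 pred1 m -> sel_worst r i = (i == m)%:R.
Proof.
by move=> wpE; rewrite /sel_worst (eq_card wpE) card1 /= wpE divr1.
Qed.

Lemma worst_parent_ranking_pred1 n (f : bs n -> nat) (p : 'I_k.+1 -> bs n) m :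
  m != ord_max -> (forall j, f (p m) <= f (p j))%N ->
  (forall j, j != ord_max -> j != m -> f (p m) < f (p j))%N ->
  worst_parent (ranking f p) =1 pred1 m.
Proof.
move=> m_par m_min m_strict i; rewrite worst_parent_ranking /=.
have [-> | i_ne] := eqVneq i m; first by rewrite m_par; apply/forallP.
have [-> //|i_par] := eqVneq i ord_max; rewrite /=.
by apply/negbTE/forallPn; exists m; rewrite -ltnNge m_strict.
Qed.

End WorstParentSelection.

Lemma sw3K : involutive sw3.
Proof. by case=> [[|[|[|]]] ?] //=; apply/val_inj; rewrite /sw3 /= ?inordK. Qed.

Lemma sw3_eq_max i : (sw3 i == ord_max) = (i == ord_max).
Proof. by rewrite -[X in _ == X]/(sw3 ord_max) (inj_eq (can_inj sw3K)). Qed.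

Lemma worst_parent_rswap3 (r : rank 3) i :
  worst_parent (rswap3 r) i = worst_parent r (sw3 i).
Proof.
rewrite /worst_parent /= sw3_eq_max; congr andb.
apply/forallP/forallP => r_i j; last by rewrite ffunE.
by have := r_i (sw3 j); rewrite ffunE sw3K.
Qed.

Lemma sel_worst_rswap3 R (r : rank 3) i :
  sel_worst R r i = sel_worst R (rswap3 r) (sw3 i).
Proof.
have card_swap : #|worst_parent (rswap3 r)| = #|worst_parent r|.
  rewrite -!sum1_card (reindex_inj (can_inj sw3K)).
  by apply: eq_bigl => j; have := worst_parent_rswap3 r (sw3 j); rewrite sw3K.
by rewrite /sel_worst card_swap worst_parent_rswap3 sw3K sw3_eq_max.
Qed.

Section BitStrings.
Variable n : nat.
Implicit Types (x y z : bs n) (t : nat).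

Definition flip_at (k : nat) x : bs n := [ffun i : 'I_n => (i == k :> nat) (+) x i].

Definition zeros : bs n := [ffun => false].

Definition diff_pos x y : nat := \sum_(i < n | x i != y i) i.

Definition dist z x : nat := \sum_(i < n) (x i (+) z i).

Definition bit_at z t : bool := if insub t is Some i then z i else false.

Definition prefix z t : bs n := [ffun i : 'I_n => (i < t)%N && z i].

Lemma flip_atK k : involutive (flip_at k).
Proof. by move=> x; apply/ffunP => i; rewrite !ffunE addKb. Qed.

Lemma flip_at_out k x : (n <= k)%N -> flip_at k x = x.
Proof.
move=> le_nk; apply/ffunP => i; rewrite ffunE.
by have /ltn_eqF -> : (i < k)%N by apply: leq_trans le_nk.
Qed.

Lemma diff_posC x y : diff_pos x y = diff_pos y x.
Proof. by apply: eq_bigl => i; rewrite eq_sym. Qed.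

Lemma diff_pos_flip_at x (i : 'I_n) : diff_pos x (flip_at i x) = i.
Proof.
rewrite /diff_pos (big_pred1 i) // => j /=.
by rewrite ffunE; case: (x j); rewrite ?addbT ?addbF /= ?negbK.
Qed.

Lemma dist_le z x : (dist z x <= n)%N.
Proof.
rewrite -[X in (_ <= X)%N]card_ord -sum1_card.
by apply: leq_sum => i _; case: (_ (+) _).
Qed.

Lemma Om_leE z x y : (Om z x <= Om z y)%N = (dist z y <= dist z x)%N.
Proof.
have := dist_le z x; have := dist_le z y.
by rewrite /Om -/(dist z x) -/(dist z y); lia.
Qed.

Lemma Om_ltE z x y : (Om z x < Om z y)%N = (dist z y < dist z x)%N.
Proof. by rewrite !ltnNge Om_leE. Qed.

Lemma dist_flip_at z x (i : 'I_n) :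
  (dist z (flip_at i x) + (x i (+) z i) = dist z x + ~~ (x i (+) z i))%N.
Proof.
rewrite /dist (bigD1 i) // [in RHS](bigD1 i) //= ffunE eqxx.
rewrite (eq_bigr (fun j => nat_of_bool (x j (+) z j))) => [|j j_ne]; last first.
  by rewrite ffunE (negbTE j_ne : (j == i :> nat) = false).
by case: (x i); case: (z i) => /=; lia.
Qed.

Lemma dist_flip_at_le z x k : (dist z (flip_at k x) <= (dist z x).+1)%N.
Proof.
have [lt_kn|le_nk] := ltnP k n; last by rewrite flip_at_out.
by have := dist_flip_at z x (Ordinal lt_kn); case: (_ (+) _) => /=; lia.
Qed.

Lemma is_opt_self z : is_opt (Om z) z.
Proof.
apply/forallP => y; rewrite Om_leE.
by rewrite (_ : dist z z = 0%N) // /dist big1 // => i _; rewrite addbb.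
Qed.

Lemma is_opt_dim0 z x : n = 0%N -> is_opt (Om z) x.
Proof.
move=> n0; apply/forallP => y; rewrite Om_leE.
by have := dist_le z x; rewrite n0 leqn0 => /eqP ->.
Qed.

Lemma bit_atE z (i : 'I_n) : bit_at z i = z i.
Proof. by rewrite /bit_at valK. Qed.

Lemma prefix0 z : prefix z 0 = zeros.
Proof. by apply/ffunP => i; rewrite !ffunE. Qed.

Lemma prefix_dim z : prefix z n = z.
Proof. by apply/ffunP => i; rewrite ffunE ltn_ord. Qed.

Lemma prefix_last z (i : 'I_n) : prefix z i.+1 i = z i.
Proof. by rewrite ffunE ltnSn. Qed.

Lemma prefixS z t : prefix z t.+1 = if bit_at z t then flip_at t (prefix z t) else prefix z t.
Proof.
apply/ffunP => i; have [lt_it|gt_it|eq_it] := ltngtP i t.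
- by case: bit_at; rewrite !ffunE ltnS (ltnW lt_it) lt_it ?(ltn_eqF lt_it).
- case: bit_at; rewrite !ffunE ltnNge gt_it [(i < t)%N]ltnNge (ltnW gt_it) //.
  by rewrite (gtn_eqF gt_it).
- by rewrite -eq_it bit_atE; case zi: (z i); rewrite !ffunE ltnn ltnSn ?eqxx zi.
Qed.

End BitStrings.

(* On ties any choice symmetric in the two parents would do: ties never occur
   on the runs analysed below. *)
Definition fitter_parent n (x1 x2 : bs n) (r : rank 2) : bs n :=
  if r (ord0, ord_max) && ~~ r (ord_max, ord0) then x2
  else if r (ord_max, ord0) && ~~ r (ord0, ord_max) then x1
  else [ffun i => x1 i && x2 i].

(* On the runs analysed below the two parents differ in exactly one position
   [t], so [diff_pos] recovers the generation counter without any memory. *)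
Definition child n (x1 x2 : bs n) (r : rank 2) : bs n :=
  flip_at (diff_pos x1 x2).+1 (fitter_parent x1 x2 r).

Definition onemax21 (R : realType) n : alg21 R n :=
  Alg21 (fun x => (x == zeros n)%:R) (fun x1 x2 => (x2 == flip_at 0 x1)%:R)
    (fun x1 x2 r y => (y == child x1 x2 r)%:R) (fun _ _ _ r i => sel_worst R r i).

Lemma fitter_parent_rswap2 n (x1 x2 : bs n) r :
  fitter_parent x2 x1 (rswap2 r) = fitter_parent x1 x2 r.
Proof.
have sw2_0 : sw2 ord0 = ord_max by apply/val_inj; rewrite /= inordK.
have sw2_max : sw2 ord_max = ord0 by apply/val_inj; rewrite /= inordK.
rewrite /fitter_parent !ffunE /= sw2_0 sw2_max.
by case: (r (ord0, ord_max)); case: (r (ord_max, ord0)) => //=;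
  apply/ffunP => i; rewrite !ffunE andbC.
Qed.

Lemma fitter_parent_ranking n (f : bs n -> nat) x1 x2 : f x1 != f x2 ->
  fitter_parent x1 x2 (ranking f (pop2 x1 x2)) = if (f x1 < f x2)%N then x2 else x1.
Proof. by rewrite /fitter_parent !ffunE /=; case: ltngtP. Qed.

Lemma child_rswap2 n (x1 x2 : bs n) r : child x2 x1 (rswap2 r) = child x1 x2 r.
Proof. by rewrite /child diff_posC fitter_parent_rswap2. Qed.

Lemma onemax21_elitist (R : realType) n : elitist21 (onemax21 R n).
Proof.
have indicator_distr (T : finType) (a : T) : is_distr (fun x => (x == a)%:R : R).
  by split=> [x|]; rewrite ?ler0n ?sum_indicator.
split; first by split=> *; try exact: indicator_distr; exact: sel_worst_distr.
split; [|split] => /=.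
- by move=> x1 x2 r y; rewrite child_rswap2.
- move=> _ _ _; exact: sel_worst_rswap3.
- move=> f x1 x2 y i; exact: sel_worst_elitist.
Qed.

Section Trajectory.
Variables (R : realType) (n : nat) (z : bs n).

Local Notation survival := (surv (onemax21 R n) (Om z)).

Definition state t := (prefix z t, flip_at t (prefix z t)).

Definition offspring t := flip_at t.+1 (prefix z t.+1).

Definition loser t : 'I_3 := if bit_at z t then ord0 else lift ord0 ord0.

Lemma state_fitter t : state t =
  if bit_at z t then (flip_at t (prefix z t.+1), prefix z t.+1)
  else (prefix z t.+1, flip_at t (prefix z t.+1)).
Proof. by rewrite /state prefixS; case: bit_at; rewrite ?flip_atK. Qed.

Lemma Om_worse_lt t : (t < n)%N ->
  (Om z (flip_at t (prefix z t.+1)) < Om z (prefix z t.+1))%N.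
Proof.
move=> lt_tn; have := dist_flip_at z (prefix z t.+1) (Ordinal lt_tn).
by rewrite (prefix_last z (Ordinal lt_tn)) addbb Om_ltE /=; lia.
Qed.

Lemma Om_worse_le_offspring t : (t < n)%N ->
  (Om z (flip_at t (prefix z t.+1)) <= Om z (offspring t))%N.
Proof.
move=> lt_tn; have := dist_flip_at z (prefix z t.+1) (Ordinal lt_tn).
have := dist_flip_at_le z (prefix z t.+1) t.+1.
by rewrite (prefix_last z (Ordinal lt_tn)) addbb Om_leE /offspring /=; lia.
Qed.

Lemma child_state t : (t < n)%N ->
  child (state t).1 (state t).2 (ranking (Om z) (pop2 (state t).1 (state t).2))
  = offspring t.
Proof.
move=> lt_tn; have worse_lt := Om_worse_lt lt_tn.
rewrite /child [diff_pos _ _](diff_pos_flip_at _ (Ordinal lt_tn)) state_fitter.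
case: bit_at; rewrite /= fitter_parent_ranking /= ?worse_lt //.
- by rewrite ltn_eqF.
- by rewrite ltnNge (ltnW worse_lt).
- by rewrite gtn_eqF.
Qed.

Lemma worst_parent_state t : (t < n)%N ->
  worst_parent (ranking (Om z) (pop3 (state t).1 (state t).2 (offspring t)))
  =1 pred1 (loser t).
Proof.
move=> lt_tn; have worse_lt := Om_worse_lt lt_tn.
have worse_le := Om_worse_le_offspring lt_tn.
rewrite state_fitter /loser; case: bit_at; apply: worst_parent_ranking_pred1 => //.
all: by case=> [[|[|[|]]] ?] //; apply: ltnW.
Qed.

Lemma keep_state t :
  keep (state t).1 (state t).2 (offspring t) (loser t) = state t.+1.
Proof. by rewrite state_fitter /loser [state t.+1]/state; case: bit_at. Qed.

Lemma surv_succ_state t x1 x2 : (t < n)%N ->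
  (forall x1 x2, (x1, x2) != state t -> survival t x1 x2 = 0) ->
  survival t.+1 x1 x2 = survival t (state t).1 (state t).2
    * (~~ is_opt (Om z) (offspring t))%:R * ((x1, x2) == state t.+1)%:R.
Proof.
move=> lt_tn off_state0 /=.
rewrite (big_only1 (state t).1) // => [|x1' ne1 _]; last first.
  by do 3 (apply: big1 => ? _); rewrite off_state0 ?xpair_eqE ?(negbTE ne1) ?mul0r.
rewrite (big_only1 (state t).2) // => [|x2' ne2 _]; last first.
  by do 2 (apply: big1 => ? _); rewrite off_state0 ?xpair_eqE ?(negbTE ne2) ?andbF ?mul0r.
rewrite (big_only1 (offspring t)) // => [|y ne_y _]; last first.
  by apply: big1 => ? _; rewrite /= child_state // (negbTE ne_y) mulr0 !mul0r.
rewrite (big_only1 (loser t)) // => [|i ne_i _]; last first.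
  by rewrite /= (sel_worst_pred1 _ _ (worst_parent_state lt_tn)) (negbTE ne_i) mulr0 mul0r.
rewrite /= child_state // (sel_worst_pred1 _ _ (worst_parent_state lt_tn)) keep_state.
by rewrite !eqxx mulr1 mulr1 eq_sym.
Qed.

Lemma surv_off_state t x1 x2 : (t < n)%N -> (x1, x2) != state t -> survival t x1 x2 = 0.
Proof.
elim: t x1 x2 => [|t IH] x1 x2 lt_tn ne_state.
  move: ne_state; rewrite /= /state prefix0 xpair_eqE.
  have [-> /= ne2|_ _] := eqVneq x1 (zeros n); last by rewrite !mul0r.
  by rewrite (negbTE ne2) mulr0 mul0r.
have lt_tn' := ltnW lt_tn.
rewrite surv_succ_state // => [|x1' x2']; last exact: IH.
by rewrite (negbTE ne_state) mulr0.
Qed.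

Lemma surv_state_bounds t : (t < n)%N -> 0 <= survival t (state t).1 (state t).2 <= 1.
Proof.
elim: t => [|t IH] lt_tn.
  by rewrite /= prefix0 !eqxx !mul1r ler0n lern1 leq_b1.
have lt_tn' := ltnW lt_tn.
rewrite surv_succ_state // => [|x1 x2]; last exact: surv_off_state.
by rewrite eqxx mulr1; case: (is_opt _ _); rewrite /= ?mulr0 ?lexx ?ler01 ?mulr1 ?IH.
Qed.

Lemma surv_last x1 x2 : survival n.-1 x1 x2 = 0.
Proof.
have [n0|n_gt0] := posnP n; first by apply: surv_opt; rewrite is_opt_dim0.
have lt_n1n : (n.-1 < n)%N by rewrite prednK.
have [st|] := eqVneq (x1, x2) (state n.-1); last exact: surv_off_state.
apply: surv_opt; have := prefixS z n.-1; rewrite prednK // prefix_dim.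
by case: st => -> ->; case: bit_at => <-; rewrite is_opt_self ?orbT.
Qed.

Lemma tailP_onemax21 k : 0 <= tailP (onemax21 R n) (Om z) k <= (k <= n)%N%:R.
Proof.
case: k => [|[|t]] /=; first by rewrite ler01 lexx.
  rewrite (big_only1 (zeros n)) ?eqxx ?mul1r // => [|x /negbTE -> _]; last by rewrite mul0r.
  have [n0|_] := posnP n; first by rewrite is_opt_dim0 //= lexx.
  by rewrite ler0n lern1 leq_b1.
have [lt_t2n|le_nt2] := leqP t.+2 n.
  rewrite (big_only1 (state t).1) // => [|x1 ne1 _]; last first.
    by apply: big1 => x2 _; rewrite surv_off_state ?xpair_eqE ?(negbTE ne1) //; lia.
  rewrite (big_only1 (state t).2) // => [|x2 ne2 _]; last first.
    by rewrite surv_off_state ?xpair_eqE ?(negbTE ne2) ?andbF //; lia.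
  apply: surv_state_bounds; lia.
have surv0 := surv_eq0_ge (_ : (n.-1 <= t)%N) surv_last.
by rewrite big1 ?lexx // => x1 _; rewrite big1 // => x2 _; rewrite surv0 //; lia.
Qed.

End Trajectory.

Theorem theorem3 (R : realType) (n : nat) :
  (* Las Vegas: some (2+1) elitist algorithm has expected runtime <= n+1 on every OneMax function *)
  (exists A : alg21 R n, elitist21 A /\
     forall z : bs n, (expected_runtime A (Om z) <= (n.+1)%:R%:E)%E)
  /\
  (* Monte Carlo: for every p in (0,1), some (2+1) elitist algorithm samples the optimum
     within n+1 evaluations with probability at least 1-p on every OneMax function *)
  (forall p : R, 0 < p < 1 ->
     exists A : alg21 R n, elitist21 A /\
       forall z : bs n, 1 - p <= 1 - tailP A (Om z) n.+1).
Proof.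
split=> [|p /andP[p_gt0 _]]; exists (onemax21 R n); split=> [|z]; try exact: onemax21_elitist.
  have tail_ge0 k : (0 <= (tailP (onemax21 R n) (Om z) k)%:E)%E.
    by rewrite lee_fin; case/andP: (tailP_onemax21 R z k).
  rewrite /expected_runtime (nneseries_split 0 n.+1) // eseries0 ?adde0 => [|k lt_nk _].
    rewrite sumEFin lee_fin -[n.+1]subn0 -sumr_const_nat ler_sum // => k _.
    by case/andP: (tailP_onemax21 R z k) => _ /le_trans; apply; rewrite lern1 leq_b1.
  case/andP: (tailP_onemax21 R z k); rewrite (leqNgt k n) lt_nk /= => ge0 le0.
  by congr (_%:E); apply/le_anti; rewrite le0 ge0.
have := tailP_onemax21 R z n.+1; rewrite ltnn /= => /andP[_ tail_le0]; lra.
Qed.
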